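(* For sufficiently large absolute constants $a$ and $b$ the following holds. Let $A$ be a finite multiset of $n$ points in $\mathbb{R}^d$ with mean $\mu$, and $\varepsilon,\delta\in(0,1)$. Let $k=b\log\delta^{-1}$ and for $i=1,\dots,k$ let $\hat\mu_i$ be the average of $a\varepsilon^{-1}$ points drawn independently and uniformly at random from $A$ (all draws independent). Let $r=\frac{1}{11}\sqrt{\frac{\varepsilon\,\mathrm{Opt}}{n}}$ and let $G=\{i:\|\hat\mu_i-\mu\|\le r\}$. Then with probability at least $1-\delta$ the event $\mathcal{E}=\{|G|\ge\frac{7}{10}\,b\log\delta^{-1}\}$ holds.
   Context: $\mu=\frac1n\sum_{p\in A}p$ and $\mathrm{Opt}=\sum_{p\in A}\|p-\mu\|^2$ (Euclidean norm). Integrality of $k$ and $a\varepsilon^{-1}$ is ignored. *)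

From HB Require Import structures.
From mathcomp Require Import all_boot all_order all_algebra.
From mathcomp Require Import reals exp.
Set Implicit Arguments. Unset Strict Implicit. Unset Printing Implicit Defensive.
Import Order.TTheory GRing.Theory Num.Theory.
Local Open Scope ring_scope.

Section Defs.
Variables (R : realType) (d n : nat).

Definition enorm (v : 'rV[R]_d) : R := Num.sqrt (\sum_(j < d) v ord0 j ^+ 2).

(* The multiset A of n points is given by an indexing p : 'I_n -> R^d. *)
Definition mean (p : 'I_n -> 'rV[R]_d) : 'rV[R]_d := n%:R^-1 *: \sum_(i < n) p i.

Definition Opt (p : 'I_n -> 'rV[R]_d) : R :=
  \sum_(i < n) enorm (p i - mean p) ^+ 2.

Definition ceiln (x : R) : nat := `|Num.ceil x|%N.

(* Sample space: for each of k estimators, m independent uniform indices into A. *)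
Definition sample_space (k m : nat) := {ffun 'I_k -> {ffun 'I_m -> 'I_n}}.

Definition est (p : 'I_n -> 'rV[R]_d) (k m : nat) (w : sample_space k m) (i : 'I_k)
  : 'rV[R]_d := m%:R^-1 *: \sum_(j < m) p (w i j).

Definition uprob (k m : nat) (E : pred (sample_space k m)) : R :=
  #|E|%:R / #|{: sample_space k m}|%:R.

End Defs.

Arguments uprob {R n k m} E.

From mathcomp Require Import all_boot all_order all_algebra.
From mathcomp Require Import reals exp sequences.
From mathcomp Require Import ring lra zify.
Set Implicit Arguments.
Unset Strict Implicit.
Unset Printing Implicit Defensive.
Import Order.TTheory GRing.Theory Num.Theory.
Local Open Scope ring_scope.

(* Each estimate is the mean of m independent uniform draws from A, so its
   mean squared distance to mu is Opt / (m n): expanding the square, the cross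
   terms vanish because the centered points sum to 0.  By Chebyshev, once
   m eps >= 1023 * 11^2 an estimate misses the ball of radius r around mu with
   probability at most 1/1023.  The k estimates are independent, so
   1024 ^ (number of misses) has expectation at most (1 + 1023/1023)^k = 2^k,
   and Markov's inequality bounds the probability of more than 3k/10 misses by
   2^k / 2^(3k) = 4^-k, which is at most delta once k >= ln (1/delta), as
   e <= 4. *)

Section SumFfun.
Variables (R : comPzSemiRingType) (I J : finType).

Lemma sum_ffun_app (i : I) (h : J -> R) :
  \sum_(v : {ffun I -> J}) h (v i) = (\sum_x h x) * #|J|%:R ^+ #|I|.-1.
Proof.
pose g i' := if i' == i then h else fun _ : J => 1.
transitivity (\sum_(v : {ffun I -> J}) \prod_i' g i' (v i')).
  apply: eq_bigr => v _; rewrite (bigD1 i) //= /g eqxx big1 ?mulr1 //.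
  by move=> i' /negPf ->.
rewrite -bigA_distr_bigA (bigD1 i) //= /g eqxx; congr (_ * _).
rewrite (eq_bigr (fun _ => #|J|%:R)) => [|i' /negPf ->]; last by rewrite sumr_const.
by rewrite prodr_const cardC1.
Qed.

Lemma sum_ffun_app2_eq0 (i i' : I) (h h' : J -> R) :
  i != i' -> \sum_x h x = 0 -> \sum_(v : {ffun I -> J}) h (v i) * h' (v i') = 0.
Proof.
move=> ii' h0.
pose g j := if j == i then h else if j == i' then h' else fun _ : J => 1.
transitivity (\sum_(v : {ffun I -> J}) \prod_j g j (v j)).
  apply: eq_bigr => v _; rewrite (bigD1 i) //= /g eqxx (bigD1 i') /=; last first.
    by rewrite eq_sym.
  rewrite eq_sym (negPf ii') eqxx big1 ?mulr1 //.
  by move=> j /andP[/negPf -> /negPf ->].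
by rewrite -bigA_distr_bigA (bigD1 i) //= /g eqxx h0 mul0r.
Qed.

Lemma sum_ffun_sqr_sum (y : J -> R) : \sum_x y x = 0 ->
  \sum_(v : {ffun I -> J}) (\sum_i y (v i)) ^+ 2
   = #|I|%:R * #|J|%:R ^+ #|I|.-1 * \sum_x y x ^+ 2.
Proof.
move=> y0.
have diag i : \sum_i' \sum_(v : {ffun I -> J}) y (v i) * y (v i')
    = (\sum_x y x ^+ 2) * #|J|%:R ^+ #|I|.-1.
  rewrite (bigD1 i) //= [X in _ + X]big1 ?addr0 => [|i' i'i]; last first.
    by apply: sum_ffun_app2_eq0; rewrite // eq_sym.
  rewrite (sum_ffun_app i (fun x => y x * y x)).
  by under [in RHS]eq_bigr do rewrite expr2.
under eq_bigr do rewrite expr2 big_distrlr /=.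
rewrite exchange_big /=.
under eq_bigr do rewrite exchange_big /= diag.
by rewrite sumr_const -[RHS]mulrA mulr_natl mulrC.
Qed.

End SumFfun.

Lemma ler_card_sum (R : numDomainType) (T : finType) (P : pred T) (f : T -> R) (t : R) :
  (forall x, 0 <= f x) -> (forall x, P x -> t <= f x) -> #|P|%:R * t <= \sum_x f x.
Proof.
move=> f0 Pf; rewrite (bigID P) /= -[leLHS]addr0 lerD ?sumr_ge0 //.
by rewrite -sum1_card natr_sum mulr_suml ler_sum // => x Px; rewrite mul1r Pf.
Qed.

Section SampleMean.
Variables (R : realType) (d n m : nat) (p : 'I_n -> 'rV[R]_d).
Hypotheses (n_gt0 : (0 < n)%N) (m_gt0 : (0 < m)%N).

Definition sample_mean (v : {ffun 'I_m -> 'I_n}) : 'rV[R]_d :=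
  m%:R^-1 *: \sum_j p (v j).

Lemma enorm_sqr (x : 'rV[R]_d) : enorm x ^+ 2 = \sum_c x ord0 c ^+ 2.
Proof. by rewrite sqr_sqrtr // sumr_ge0 // => c _; rewrite sqr_ge0. Qed.

Lemma Opt_ge0 : 0 <= Opt p.
Proof. by rewrite sumr_ge0 // => i _; rewrite sqr_ge0. Qed.

Lemma sum_sub_mean : \sum_i (p i - mean p) = 0.
Proof.
rewrite sumrB sumr_const card_ord /mean -scaler_nat scalerA mulfV ?scale1r ?subrr //.
by rewrite pnatr_eq0 -lt0n.
Qed.

Lemma sample_meanB (v : {ffun 'I_m -> 'I_n}) (u : 'rV[R]_d) :
  sample_mean v - u = m%:R^-1 *: \sum_j (p (v j) - u).
Proof.
have m0 : m%:R != 0 :> R by rewrite pnatr_eq0 -lt0n.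
by rewrite sumrB sumr_const card_ord scalerBr -scaler_nat scalerA mulVf ?scale1r.
Qed.

Lemma sum_sqr_dist_sample_mean :
  \sum_(v : {ffun 'I_m -> 'I_n}) enorm (sample_mean v - mean p) ^+ 2
  = m%:R^-1 * n%:R ^+ m.-1 * Opt p.
Proof.
pose y c i := (p i - mean p) ord0 c.
have y0 c : \sum_i y c i = 0 by rewrite /y -summxE sum_sub_mean mxE.
transitivity (\sum_c m%:R^-1 ^+ 2 *
  \sum_(v : {ffun 'I_m -> 'I_n}) (\sum_j y c (v j)) ^+ 2).
  under eq_bigr do rewrite enorm_sqr.
  rewrite exchange_big /=; apply: eq_bigr => c _; rewrite mulr_sumr.
  by apply: eq_bigr => v _; rewrite sample_meanB mxE summxE exprMn.
under eq_bigr do rewrite sum_ffun_sqr_sum // !card_ord.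
rewrite /Opt; under [in RHS]eq_bigr do rewrite enorm_sqr.
rewrite [in RHS]exchange_big mulr_sumr; apply: eq_bigr => c _.
by rewrite /y; field; rewrite pnatr_eq0 -lt0n.
Qed.

Definition far_samples (r : R) :=
  [pred v : {ffun 'I_m -> 'I_n} | r < enorm (sample_mean v - mean p)].

Lemma card_far_samples_le (r : R) : 0 <= r ->
  #|far_samples r|%:R * r ^+ 2 <= m%:R^-1 * n%:R ^+ m.-1 * Opt p.
Proof.
move=> r_ge0; rewrite -sum_sqr_dist_sample_mean.
apply: ler_card_sum => [v | v /ltW]; first exact: sqr_ge0.
by rewrite ler_sqr ?nnegrE // sqrtr_ge0.
Qed.

Lemma far_samples_Opt0 (r : R) : 0 <= r -> Opt p = 0 -> far_samples r =i pred0.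
Proof.
move=> r_ge0 Opt0 v; rewrite !inE; apply/negbTE; rewrite -leNgt.
have := sum_sqr_dist_sample_mean; rewrite Opt0 mulr0.
move=> /(psumr_eq0P (fun v _ => sqr_ge0 _)) /(_ v isT) /eqP.
by rewrite sqrf_eq0 => /eqP ->.
Qed.

Lemma card_far_samples_sqrt (c t eps : R) : 0 <= c -> 0 < t -> 0 < eps ->
  c * t ^+ 2 <= eps * m%:R ->
  c * #|far_samples (t^-1 * Num.sqrt (eps * Opt p / n%:R))|%:R <= n%:R ^+ m.
Proof.
move=> c_ge0 t_gt0 eps_gt0 ct_le; set r := _ * Num.sqrt _.
have [Opt0 | Opt_neq0] := eqVneq (Opt p) 0.
  rewrite (eq_card0 (far_samples_Opt0 _ Opt0)) ?mulr0 ?exprn_ge0 //.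
  by rewrite mulr_ge0 ?invr_ge0 ?sqrtr_ge0 ?ltW.
have Opt_gt0 : 0 < Opt p by rewrite lt0r Opt_neq0 Opt_ge0.
have n_pos : 0 < n%:R :> R by rewrite ltr0n.
have m_pos : 0 < m%:R :> R by rewrite ltr0n.
have r2 : r ^+ 2 = eps * Opt p / (t ^+ 2 * n%:R).
  rewrite exprMn sqr_sqrtr ?divr_ge0 ?mulr_ge0 ?ltW //.
  by field; rewrite !lt0r_neq0.
have r_gt0 : 0 < r by rewrite mulr_gt0 ?invr_gt0 ?sqrtr_gt0 ?divr_gt0 ?mulr_gt0.
rewrite -(ler_pM2r (exprn_gt0 2 r_gt0)) -mulrA.
apply: le_trans (ler_wpM2l c_ge0 (card_far_samples_le (ltW r_gt0))) _.
set u := m%:R^-1 * n%:R ^+ m.-1 * Opt p / t ^+ 2.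
have u_gt0 : 0 < u by rewrite /u divr_gt0 ?mulr_gt0 ?invr_gt0 ?exprn_gt0.
rewrite [leLHS](_ : _ = c * t ^+ 2 * u); last by rewrite /u; field; rewrite !lt0r_neq0.
rewrite [leRHS](_ : _ = eps * m%:R * u) ?ler_pM2r //.
rewrite r2 /u -[in n%:R ^+ m](prednK m_gt0) exprS.
by field; rewrite !lt0r_neq0.
Qed.

End SampleMean.

Section ManyBadCoordinates.
Local Open Scope nat_scope.

Lemma card_sum_bool (T : finType) (P : pred T) : #|P| = \sum_x P x.
Proof.
by rewrite -sum1_card big_mkcond; apply: eq_bigr => x _; rewrite unfold_in; case: P.
Qed.

Variables (V : finType) (k : nat) (bad : pred V).

Lemma sum_expn_card_bad (c : nat) :
  \sum_(w : {ffun 'I_k -> V}) c.+1 ^ #|[set i | bad (w i)]|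
  = (#|V| + c * #|bad|) ^ k.
Proof.
under eq_bigr do rewrite cardsE card_sum_bool expn_sum.
rewrite -(bigA_distr_bigA (fun _ v => c.+1 ^ bad v)) /= prod_nat_const card_ord.
congr (_ ^ _).
rewrite (eq_bigr (fun v => 1 + c * bad v)) => [|v _]; last first.
  by case: (bad v); rewrite /= ?muln1 ?muln0.
by rewrite big_split /= sum1_card -big_distrr -card_sum_bool.
Qed.

Lemma card_many_bad_coords : 1023 * #|bad| <= #|V| ->
  #|[pred w : {ffun 'I_k -> V} | 3 * k < 10 * #|[set i | bad (w i)]|]| * 4 ^ k
  <= #|V| ^ k.
Proof.
move=> bad_small.
set many_bad := [pred w | _].
have many_bad_le : #|many_bad| * 8 ^ k
    <= \sum_(w : {ffun 'I_k -> V}) 1024 ^ #|[set i | bad (w i)]|.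
  rewrite -sum_nat_const big_mkcond /=; apply: leq_sum => w _.
  case: ifP => // /ltnW many.
  by rewrite (_ : 8 = 2 ^ 3) // (_ : 1024 = 2 ^ 10) // -!expnM leq_exp2l.
rewrite sum_expn_card_bad in many_bad_le.
have moment_le e : (#|V| + 1023 * #|bad|) ^ e <= (#|V| * 2) ^ e.
  by elim: e => // e IH; rewrite !expnS leq_mul // muln2 -addnn leq_add2l.
rewrite -(leq_pmul2r (expn_gt0 2 k)) -mulnA -!expnMn.
exact: leq_trans many_bad_le (moment_le k).
Qed.

End ManyBadCoordinates.

Section RealBounds.
Variable R : realType.

Lemma ceiln_ge (x : R) : 0 <= x -> x <= (ceiln x)%:R.
Proof.
move=> x_ge0; rewrite /ceiln natr_absz ger0_norm ?ceil_ge //.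
by rewrite ceil_ge0 (lt_le_trans _ x_ge0) // ltrN10.
Qed.

Lemma ceiln_gt0 (x : R) : 0 < x -> (0 < ceiln x)%N.
Proof. by move=> x_gt0; rewrite /ceiln absz_gt0 ceil_neq0 x_gt0 orbT. Qed.

Lemma expR1_le4 : expR 1 <= 4%:R :> R.
Proof.
have half_le : 2^-1 <= expR (- 2^-1) :> R by apply: le_trans (expR_ge1Dx _); lra.
have -> : expR 1 = (expR (- 2^-1))^-1 ^+ 2 :> R.
  by rewrite -expRN opprK -expRM_natl; congr expR; field.
rewrite (_ : 4%:R = 2%:R ^+ 2); last by rewrite -natrX.
apply: lerXn2r; rewrite ?nnegrE ?invr_ge0 ?expR_ge0 ?ler0n //.
by rewrite -[leRHS]invrK lef_pV2 ?posrE ?expR_gt0 ?invr_gt0 ?ltr0n.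
Qed.

Lemma le_expn4_ln (x : R) (k : nat) : 0 < x -> ln x <= k%:R -> x <= 4%:R ^+ k.
Proof.
move=> x_gt0 lnx_le; rewrite -(lnK x_gt0).
apply: le_trans (_ : expR k%:R <= _); first by rewrite ler_expR.
rewrite -[k%:R]mulr1 expRM_natl.
by apply: lerXn2r; rewrite ?nnegrE ?expR_ge0 ?ler0n ?expR1_le4.
Qed.

Lemma card_ratio_ge1B (T : finType) (E : pred T) (c : nat) (delta : R) :
  (0 < #|T|)%N -> (#|[predC E]| * c <= #|T|)%N -> 0 < delta -> delta^-1 <= c%:R ->
  1 - delta <= #|E|%:R / #|T|%:R.
Proof.
move=> T_gt0 predC_le delta_gt0 c_ge.
have delta_c : 1 <= delta * c%:R.
  by rewrite -[leLHS](mulfV (lt0r_neq0 delta_gt0)) ler_pM2l.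
have E_C : #|E|%:R + #|[predC E]|%:R = #|T|%:R :> R by rewrite -natrD cardC.
move: predC_le; rewrite -(ler_nat R) natrM => predC_le.
have C_ge0 : 0 <= #|[predC E]|%:R :> R := ler0n _ _.
rewrite ler_pdivlMr ?ltr0n //; nra.
Qed.

Lemma card_setC_gt (k : nat) (G : {set 'I_k}) (x : R) :
  x <= k%:R -> #|G|%:R < 7%:R / 10%:R * x -> (3 * k < 10 * #|~: G|)%N.
Proof.
move=> x_le G_lt.
have G_small : (10 * #|G| < 7 * k)%N by rewrite -(ltr_nat R) !natrM; lra.
have := cardsC G; rewrite card_ord; lia.
Qed.

End RealBounds.

Theorem lemma3p2 :
  exists a0 b0 : rat,
  forall (R : realType) (a b : R), ratr a0 <= a -> ratr b0 <= b ->
  forall (d n : nat) (p : 'I_n -> 'rV[R]_d) (eps delta : R),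
  (0 < n)%N -> 0 < eps < 1 -> 0 < delta < 1 ->
  let k := ceiln (b * ln delta^-1) in
  let m := ceiln (a / eps) in
  let r := 11%:R^-1 * Num.sqrt (eps * Opt p / n%:R) in
  1 - delta <=
  uprob (R := R) (fun w : sample_space n k m =>
    (7%:R / 10%:R * (b * ln delta^-1)
       <= #|[set i : 'I_k | enorm (est p w i - mean p) <= r]|%:R)).
Proof.
exists (1023 * 11 ^ 2)%N%:R, 1.
move=> R a b a_ge b_ge d n p eps delta n_gt0 /andP[eps_gt0 _] /andP[delta_gt0 delta_lt1].
cbv zeta; set k := ceiln _; set m := ceiln _; set r := _ * Num.sqrt _.
rewrite ratr_nat natrM natrX in a_ge; rewrite rmorph1 in b_ge.
have a_gt0 : 0 < a by apply: lt_le_trans a_ge; rewrite mulr_gt0 ?exprn_gt0 ?ltr0n.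
have m_gt0 : (0 < m)%N by rewrite ceiln_gt0 // divr_gt0.
have lnd_gt0 : 0 < ln delta^-1 by rewrite ln_gt0 // invf_gt1.
have k_ge : b * ln delta^-1 <= k%:R.
  by rewrite ceiln_ge // mulr_ge0 // ltW // (lt_le_trans ltr01).
have far_small : (1023 * #|far_samples m p r| <= #|{: {ffun 'I_m -> 'I_n}}|)%N.
  rewrite card_ffun !card_ord -(ler_nat R) natrM natrX.
  apply: card_far_samples_sqrt; rewrite ?ler0n ?ltr0n // (le_trans a_ge) //.
  by rewrite -ler_pdivrMl // mulrC ceiln_ge // ltW // divr_gt0.
rewrite /uprob; apply: (@card_ratio_ge1B _ _ _ (4 ^ k)) => //.
- by rewrite card_ffun card_ffun !card_ord !expn_gt0 n_gt0.
- rewrite [leqRHS]card_ffun card_ord.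
  apply: leq_trans (card_many_bad_coords k far_small); apply: leq_mul => //.
  apply/subset_leq_card/subsetP => w; rewrite !inE -ltNge => few_good.
  have -> : [set i | far_samples m p r (w i)]
            = ~: [set i | enorm (est p w i - mean p) <= r].
    by apply/setP => i; rewrite !inE ltNge.
  exact: card_setC_gt k_ge few_good.
- rewrite natrX; apply: le_expn4_ln; first by rewrite invr_gt0.
  exact: le_trans (ler_peMl (ltW lnd_gt0) b_ge) k_ge.
Qed.
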